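(* Let $k\in\mathbb C\setminus\mathbb Q$, $n,m\in\mathbb Z_{>0}$, with $\mathcal E$-equivalence taken at $p_0=n+k^{-1}m$. Let $E\subset\mathcal P_{n,m}$ be an $\mathcal E$-equivalence class, let $x\in\pi(n,m)$, and suppose there is $\alpha\in E$ with $S_x(\alpha)\neq\emptyset$. Then there exists a unique $\mathcal E$-equivalence class $E_x$, different from $E$, such that $X(\alpha)\cap E_x=S_x(\alpha)$ for every $\alpha\in E$.
   Context: Partitions are Young diagrams (finite sets of boxes $(i,j)\in\mathbb Z^2_{>0}$, $i$ = row, $j$ = column, closed under moving up or left); a bipartition is a pair of partitions, operations componentwise. For a box $x=(i,j)$, $c(x,a)=(j-1)+k(i-1)+a$; for $\alpha=(\lambda,\mu)$, $b_r(\alpha,k,p_0)=\sum_{x\in\lambda}c(x,0)^{r-1}+(-1)^r\sum_{y\in\mu}c(y,1+k-kp_0)^{r-1}$; bipartitions are $\mathcal E$-equivalent if all $b_r$, $r\ge1$, coincide. $\pi(n,m)=\{(i,j):1\le i\le n,1\le j\le m\}$, $\theta(i,j)=(n-i+1,m-j+1)$, $\mathcal P_{n,m}$ = bipartitions $(\lambda,\mu)$ with $\lambda,\mu\subset\pi(n,m)$. For $\alpha=(\lambda,\mu)\in\mathcal P_{n,m}$ and $x\in\pi(n,m)$, $S_x(\alpha)$ is the set consisting of $(\lambda\cup x,\mu)$, included only if $x\notin\lambda$ and $\lambda\cup x$ is a Young diagram, and of $(\lambda,\mu\setminus\theta(x))$, included only if $\theta(x)\in\mu$ and $\mu\setminus\theta(x)$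 is a Young diagram. $X(\alpha)$ is the set of all bipartitions $\beta=(\tilde\lambda,\tilde\mu)$ such that $\alpha$ is obtained from $\beta$ either by deleting one box from $\tilde\lambda$ or by adding one box to $\tilde\mu$. *)

From HB Require Import structures.
From mathcomp Require Import all_boot all_order all_algebra.
From mathcomp Require Import finmap.
From mathcomp Require Import reals.
From mathcomp Require Import complex.
Set Implicit Arguments. Unset Strict Implicit. Unset Printing Implicit Defensive.
Import Order.TTheory GRing.Theory Num.Theory.
Local Open Scope ring_scope.


(* A box (i,j): i = row, j = column. *)
Definition box := (nat * nat)%type.

Definition is_young (l : {fset box}) : bool :=
  [forall x : l, let: (i, j) := fsval x in
     [&& (0 < i)%N, (0 < j)%N,
         (1 < i)%N ==> ((i.-1, j) \in l) &
         (1 < j)%N ==> ((i, j.-1) \in l)]].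

Definition bipartition := ({fset box} * {fset box})%type.

Definition is_bip (a : bipartition) : Prop := is_young (fst a) /\ is_young (snd a).

Definition cnt (R : realType) (k : R[i]) (x : box) (a : R[i]) : R[i] :=
  ((snd x).-1)%:R + k * ((fst x).-1)%:R + a.

Definition b_r (R : realType) (r : nat) (a : bipartition) (k p0 : R[i]) : R[i] :=
  \sum_(x <- enum_fset (fst a)) cnt k x 0 ^+ r.-1
  + (-1) ^+ r * \sum_(y <- enum_fset (snd a)) cnt k y (1 + k - k * p0) ^+ r.-1.

Definition E_equiv (R : realType) (k p0 : R[i]) (a b : bipartition) : Prop :=
  forall r : nat, (0 < r)%N -> b_r r a k p0 = b_r r b k p0.

Definition in_rect (n m : nat) (x : box) : bool :=
  [&& (0 < (fst x))%N, ((fst x) <= n)%N, (0 < (snd x))%N & ((snd x) <= m)%N].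

Definition theta (n m : nat) (x : box) : box := (n - (fst x) + 1, m - (snd x) + 1)%N.

Definition P_nm (n m : nat) (a : bipartition) : Prop :=
  is_bip a /\ (forall x, x \in (fst a) -> in_rect n m x)
           /\ (forall x, x \in (snd a) -> in_rect n m x).

Definition bset := bipartition -> Prop.
Definition bset_eq (A B : bset) : Prop := forall b, A b <-> B b.

Definition is_class (R : realType) (k p0 : R[i]) (n m : nat) (E : bset) : Prop :=
  exists a0, P_nm n m a0 /\ bset_eq E (fun b => P_nm n m b /\ E_equiv k p0 a0 b).

Definition S_x (n m : nat) (x : box) (a : bipartition) : bset :=
  fun b =>
    (x \notin (fst a) /\ is_young (x |` fst a)%fset /\ b = ((x |` fst a)%fset, snd a))
    \/ (theta n m x \in (snd a) /\ is_young (snd a `\ theta n m x)%fset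
        /\ b = (fst a, (snd a `\ theta n m x)%fset)).

Definition X_of (a : bipartition) : bset :=
  fun b => is_bip b /\
    (((snd b) = (snd a) /\ exists y, y \in (fst b) /\ fst a = (fst b `\ y)%fset)
     \/ ((fst b) = (fst a) /\ exists y, y \notin (snd b) /\ snd a = (y |` snd b)%fset)).

From HB Require Import structures.
From mathcomp Require Import all_boot all_order all_algebra.
From mathcomp Require Import finmap reals complex.
From mathcomp Require Import ring zify.
Import GRing.Theory Num.Theory.
Local Open Scope ring_scope.
Set Implicit Arguments. Unset Strict Implicit.

(* Adding a box x to lambda shifts every b_r by c(x,0)^(r-1).  At
   p0 = n + m/k one has c(y, 1 + k - k p0) = - c(theta y, 0), so removing
   theta x from mu produces exactly the same shift.  Hence all of S_x(E) lies
   in one class E_x, which differs from E because b_1 goes up by 1.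
   Conversely, a neighbour in X(alpha) whose b_2 is shifted by c(x,0) must
   have added (resp. removed) a box of content c(x,0) (resp. -c(x,0)), and
   since k is irrational a positive box is determined by its content. *)

Lemma in_rect_pos n m y : in_rect n m y -> (0 < y.1)%N /\ (0 < y.2)%N.
Proof. by case/and4P. Qed.

Lemma young_pos (l : {fset box}) y : is_young l -> y \in l -> (0 < y.1)%N /\ (0 < y.2)%N.
Proof.
move=> /forallP young_l yl; have := young_l [`yl]%fset.
by case: y yl => i j _ /and4P[].
Qed.

Lemma in_rect_theta n m y : in_rect n m y -> in_rect n m (theta n m y).
Proof. by case: y => i j /and4P[/= *]; apply/and4P; split; rewrite /=; lia. Qed.

Lemma thetaK n m y : in_rect n m y -> theta n m (theta n m y) = y.
Proof. by case: y => i j /and4P[/= *]; rewrite /theta /=; congr pair; lia. Qed.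

Lemma S_x_P_nm n m x a b : in_rect n m x -> P_nm n m a -> S_x n m x a b -> P_nm n m b.
Proof.
case: a => l mu rect_x [[young_l young_mu] [rect_l rect_mu]] /=.
case=> [[_ [young_xl ->]] | [_ [young_mu' ->]]]; split=> //=; split=> // y.
- by rewrite in_fset1U => /predU1P[-> | /rect_l].
- by case/fsetD1P => _ /rect_mu.
Qed.

Lemma S_x_X_of n m x a b : is_bip a -> S_x n m x a b -> X_of a b.
Proof.
case: a => l mu [young_l young_mu] /=.
case=> [[xl [young_xl ->]] | [tmu [young_mu' ->]]]; split=> //.
- by left; split=> //; exists x; rewrite fset1U1 fsetU1K.
- by right; split=> //; exists (theta n m x); rewrite fsetD11 fsetD1K.
Qed.

Definition class_of (R : realType) (k p0 : R[i]) n m (a : bipartition) : bset :=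
  fun b => P_nm n m b /\ E_equiv k p0 a b.

Section Equivalence.

Variables (R : realType) (k p0 : R[i]) (n m : nat).

Lemma is_class_of a : P_nm n m a -> is_class k p0 n m (class_of k p0 n m a).
Proof. by move=> Pa; exists a. Qed.

Lemma class_P_nm E a : is_class k p0 n m E -> E a -> P_nm n m a.
Proof. by case=> a0 [_ defE] /defE[]. Qed.

Lemma class_equiv E a b : is_class k p0 n m E -> E a -> E b -> E_equiv k p0 a b.
Proof.
case=> a0 [_ defE] /defE[_ eq_a] /defE[_ eq_b] r r_gt0.
by rewrite -eq_a // eq_b.
Qed.

Lemma class_eq_of_mem E b : is_class k p0 n m E -> E b -> bset_eq E (class_of k p0 n m b).
Proof.
move=> classE Eb c; split=> [Ec | [Pc eq_bc]].
  by split; [exact: class_P_nm classE Ec | exact: class_equiv classE Eb Ec].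
case: (classE) => a0 [_ defE]; apply/defE; split=> // r r_gt0.
by case/defE: Eb => _ ->; rewrite ?eq_bc.
Qed.

Definition shifted_by (c : R[i]) (a b : bipartition) : Prop :=
  forall r, (0 < r)%N -> b_r r b k p0 = b_r r a k p0 + c ^+ r.-1.

Lemma shifted_by_equiv c a b a' b' : shifted_by c a b -> E_equiv k p0 a a' ->
  shifted_by c a' b' <-> E_equiv k p0 b b'.
Proof.
move=> shift_ab eq_aa'; split=> [shift' | eq_bb'] r r_gt0.
  by rewrite shift' // shift_ab // eq_aa'.
by rewrite -eq_bb' // shift_ab // eq_aa'.
Qed.

Lemma shifted_by_not_equiv c a b : shifted_by c a b -> ~ E_equiv k p0 a b.
Proof.
move=> /(_ 1%N isT) shift1 /(_ 1%N isT); rewrite shift1 expr0 => /esym/eqP.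
by rewrite -subr_eq0 addrAC subrr add0r oner_eq0.
Qed.

Lemma b_r_fsetU1l r (l mu : {fset box}) y : y \notin l ->
  b_r r ((y |` l)%fset, mu) k p0 = b_r r (l, mu) k p0 + cnt k y 0 ^+ r.-1.
Proof. by move=> yl; rewrite /b_r /= big_fsetU1 //=; ring. Qed.

Lemma b_r_fsetU1r r (l mu : {fset box}) y : y \notin mu ->
  b_r r (l, (y |` mu)%fset) k p0
  = b_r r (l, mu) k p0 + (-1) ^+ r * cnt k y (1 + k - k * p0) ^+ r.-1.
Proof. by move=> ymu; rewrite /b_r /= big_fsetU1 //=; ring. Qed.

End Equivalence.

Section Contents.

Variables (R : realType) (k : R[i]).

Lemma cnt_theta n m y : k != 0 -> in_rect n m y ->
  cnt k y (1 + k - k * (n%:R + k^-1 * m%:R)) = - cnt k (theta n m y) 0.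
Proof.
case: y => i j k0 /and4P[/= *]; rewrite /theta /cnt /=.
have -> : k * (n%:R + k^-1 * m%:R) = k * n%:R + m%:R.
  by rewrite mulrDr mulrA mulfV // mul1r.
have -> : (i.-1 = i - 1)%N by lia.
have -> : (j.-1 = j - 1)%N by lia.
have -> : ((n - i + 1).-1 = n - i)%N by lia.
have -> : ((m - j + 1).-1 = m - j)%N by lia.
rewrite !natrB //; ring.
Qed.

Lemma S_x_shifted n m x a b : k != 0 -> in_rect n m x -> S_x n m x a b ->
  shifted_by k (n%:R + k^-1 * m%:R) (cnt k x 0) a b.
Proof.
case: a => l mu k0 rect_x.
case=> [[xl [_ ->]] r _ | [/= tmu [_ ->]] [//|r] _]; first by rewrite b_r_fsetU1l.
set t := theta n m x in tmu *.
rewrite -[in b_r _ (l, mu)](fsetD1K tmu) b_r_fsetU1r ?fsetD11 //.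
rewrite cnt_theta ?in_rect_theta // thetaK //= exprS (exprNn (cnt k x 0)).
by rewrite mulN1r mulNr mulrA -expr2 sqrr_sign mul1r subrK.
Qed.

Hypothesis k_irr : ~ exists q : rat, k = ratr q.

Lemma irrational_neq0 : k != 0.
Proof. by apply/eqP => k0; apply: k_irr; exists 0; rewrite k0 rmorph0. Qed.

(* An equality of contents j + k i = j' + k i' forces k (i - i') = j' - j,
   which for irrational k is only possible when both sides vanish. *)
Lemma cnt0_inj (y z : box) : (0 < y.1)%N -> (0 < y.2)%N -> (0 < z.1)%N -> (0 < z.2)%N ->
  cnt k y 0 = cnt k z 0 -> y = z.
Proof.
case: y z => i j [i' j'] /= i_gt0 j_gt0 i'_gt0 j'_gt0.
rewrite /cnt /= !addr0 !pmulrn => eq_cnt.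
set u : int := (i.-1)%:Z - (i'.-1)%:Z; set v : int := (j'.-1)%:Z - (j.-1)%:Z.
have k_ratio : k * u%:~R = v%:~R.
  apply/eqP; rewrite -subr_eq0.
  have -> : k * u%:~R - v%:~R = ((j.-1)%:Z%:~R + k * (i.-1)%:Z%:~R)
            - ((j'.-1)%:Z%:~R + k * (i'.-1)%:Z%:~R) :> R[i].
    by rewrite /u /v !rmorphB /=; ring.
  by rewrite eq_cnt subrr.
have [u0 | u_neq0] := eqVneq u 0.
  move: k_ratio; rewrite u0 mulr0 => /esym/eqP; rewrite intr_eq0 => /eqP v0.
  by move: u0 v0; rewrite /u /v => *; congr pair; lia.
case: k_irr; exists (v%:~R / u%:~R).
by rewrite fmorph_div !rmorph_int -k_ratio mulfK // intr_eq0.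
Qed.

Lemma X_of_shifted_S_x n m x a b : in_rect n m x -> P_nm n m a -> X_of a b ->
  shifted_by k (n%:R + k^-1 * m%:R) (cnt k x 0) a b -> S_x n m x a b.
Proof.
have k0 := irrational_neq0.
case: a b => l mu [l' mu'] rect_x [_ [_ rect_mu]].
have [x1 x2] := in_rect_pos rect_x.
move=> [[young_l' young_mu'] [[/= -> [y [yl' ->]]] | [/= -> [y [ymu' /= emu]]]]]
  /(_ 2%N isT); rewrite /= expr1; [|subst mu].
- rewrite -[in b_r _ (l', _)](fsetD1K yl') b_r_fsetU1l ?fsetD11 // expr1 => /addrI.
  have [y1 y2] := young_pos young_l' yl'.
  by move=> /(cnt0_inj y1 y2 x1 x2) <-; left; rewrite fsetD11 fsetD1K.
- rewrite b_r_fsetU1r // expr1 sqrrN expr1n mul1r -addrA -[X in X = _]addr0.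
  move=> /addrI /esym /eqP; rewrite addr_eq0 => /eqP.
  have rect_y : in_rect n m y by apply: rect_mu; rewrite fset1U1.
  rewrite cnt_theta // => /oppr_inj.
  have [t1 t2] := in_rect_pos (in_rect_theta rect_y).
  move=> /(cnt0_inj t1 t2 x1 x2) eq_tx.
  have eq_y : y = theta n m x by rewrite -eq_tx thetaK.
  by subst y; right; rewrite /= fsetU1K // fset1U1.
Qed.

End Contents.

Theorem mainTheorem5 (R : realType) (k : R[i])
  (hk : ~ exists q : rat, k = ratr q)
  (n m : nat) (hn : (0 < n)%N) (hm : (0 < m)%N)
  (E : bset) (x : box) :
  let p0 := n%:R + k^-1 * m%:R in
  is_class k p0 n m E ->
  in_rect n m x ->
  (exists a, E a /\ exists b, S_x n m x a b) ->
  exists Ex : bset,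
    [/\ is_class k p0 n m Ex,
        ~ bset_eq Ex E,
        (forall a, E a -> bset_eq (fun b => X_of a b /\ Ex b) (S_x n m x a))
      & (forall Ey : bset,
           is_class k p0 n m Ey -> ~ bset_eq Ey E ->
           (forall a, E a -> bset_eq (fun b => X_of a b /\ Ey b) (S_x n m x a)) ->
           bset_eq Ey Ex)].
Proof.
move=> p0 classE rect_x [a1 [Ea1 [b1 Sb1]]].
have k0 := irrational_neq0 hk.
have P_E a : E a -> P_nm n m a := class_P_nm classE.
have shift1 := S_x_shifted k0 rect_x Sb1.
have Pb1 := S_x_P_nm rect_x (P_E _ Ea1) Sb1.
have ExP a b : E a ->
    class_of k p0 n m b1 b <-> P_nm n m b /\ shifted_by k p0 (cnt k x 0) a b.
  move=> Ea; have eqv := shifted_by_equiv b shift1 (class_equiv classE Ea1 Ea).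
  by split=> -[Pb /eqv].
exists (class_of k p0 n m b1); split.
- exact: is_class_of.
- move=> /(_ b1)[/(_ (conj Pb1 (fun _ _ => erefl))) Eb1 _].
  exact: shifted_by_not_equiv shift1 (class_equiv classE Ea1 Eb1).
- move=> a Ea b; split=> [[Xb /(ExP _ _ Ea)[_ shift]] | Sb].
    exact: X_of_shifted_S_x rect_x (P_E _ Ea) Xb shift.
  split; first by apply: S_x_X_of Sb; case: (P_E _ Ea).
  apply/(ExP _ _ Ea); split; last exact: S_x_shifted.
  exact: S_x_P_nm rect_x (P_E _ Ea) Sb.
- move=> Ey classEy _ S_Ey.
  exact: class_eq_of_mem classEy ((S_Ey _ Ea1 b1).2 Sb1).2.
Qed.
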